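(* Let $p$ be a prime and let $f\in\mathcal{B}(\mathbb{Q}_p(\mathbb{N}))$ be an idempotent whose image is a finite-dimensional $\mathbb{Q}_p$-vector space. Then $f$ is stably equivalent to zero, i.e. its class $[f]$ in $K_0(\mathcal{B}(\mathbb{Q}_p(\mathbb{N})))$ is zero.
   Context: $\mathbb{Q}_p(\mathbb{N})$ is the set of maps $\xi:\mathbb{N}\to\mathbb{Q}_p$ with $|\xi(i)|_p\le1$ for all but finitely many $i$, a $\mathbb{Z}_p$-module under coordinatewise operations, with the topology $\tau$ in which $A\subseteq\mathbb{Q}_p(\mathbb{N})$ is open iff for every finite $P\subseteq\mathbb{N}$ the set $A\cap\big(\prod_{i\in P}\mathbb{Q}_p\times\prod_{j\notin P}\mathbb{Z}_p\big)$ is open in the product topology. $\mathcal{B}(\mathbb{Q}_p(\mathbb{N}))$ is the ring of $\tau$-continuous $\mathbb{Z}_p$-linear maps. $K_0$ is the algebraic $K_0$-group of a unital ring, generated by classes of idempotent matrices. *)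

From mathcomp Require Import all_boot.
Set Implicit Arguments. Unset Strict Implicit. Unset Printing Implicit Defensive.

Section Padic.
Variable p : nat.

(* digits 0..p-1 (for p > 0 the type 'I_p.-1.+1 is 'I_p) *)
Definition digit := 'I_(p.-1).+1.
Definition mkdigit (d : nat) : digit := inord (d %% p).

(* Z_p: p-adic integers as digit streams  a = sum_i a_i p^i *)
Definition Zp := nat -> digit.
Definition trunc (a : Zp) (n : nat) : nat := \sum_(i < n) a i * p ^ i.
(* the element whose residue mod p^n is t n (for a coherent family t) *)
Definition of_trunc (t : nat -> nat) : Zp := fun n => mkdigit (t n.+1 %/ p ^ n).
Definition zzero : Zp := fun _ => ord0.
Definition zone : Zp := of_trunc (fun n => 1 %% p ^ n).
Definition zadd (a b : Zp) : Zp := of_trunc (fun n => (trunc a n + trunc b n) %% p ^ n).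
Definition zmul (a b : Zp) : Zp := of_trunc (fun n => (trunc a n * trunc b n) %% p ^ n).
Definition zopp (a : Zp) : Zp := of_trunc (fun n => (p ^ n - trunc a n) %% p ^ n).
Definition zshift (m : nat) (a : Zp) : Zp := fun i => if i < m then ord0 else a (i - m).

(* Q_p: a pair (k, a) stands for p^-k * a; normalized: k = 0 or p does not divide a *)
Definition qnormal (x : nat * Zp) : bool := (x.1 == 0) || (x.2 0 != ord0).
Fixpoint qnorm (k : nat) (a : Zp) : nat * Zp :=
  match k with
  | 0 => (0, a)
  | k'.+1 => if a 0 == ord0 then qnorm k' (fun i => a i.+1) else (k, a)
  end.
Lemma qnorm_normal k a : qnormal (qnorm k a).
Proof.
elim: k a => [|k IH] a //=.
case: eqP => H; first exact: IH.
by rewrite /qnormal /=; apply/eqP.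
Qed.
Definition Qp := {x : nat * Zp | qnormal x}.
Definition mkQ (k : nat) (a : Zp) : Qp := exist _ (qnorm k a) (qnorm_normal k a).

Definition qden (x : Qp) : nat := (proj1_sig x).1.
Definition qnum (x : Qp) : Zp := (proj1_sig x).2.
Definition qzero : Qp := mkQ 0 zzero.
Definition qone : Qp := mkQ 0 zone.
Definition qadd (x y : Qp) : Qp :=
  mkQ (qden x + qden y) (zadd (zshift (qden y) (qnum x)) (zshift (qden x) (qnum y))).
Definition qopp (x : Qp) : Qp := mkQ (qden x) (zopp (qnum x)).
Definition qmul (x y : Qp) : Qp := mkQ (qden x + qden y) (zmul (qnum x) (qnum y)).
Definition qzscale (c : Zp) (x : Qp) : Qp := mkQ (qden x) (zmul c (qnum x)).
Definition integral (x : Qp) : Prop := qden x = 0.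
Definition in_pnZp (n : nat) (x : Qp) : Prop :=
  qden x = 0 /\ forall i, i < n -> qnum x i = ord0.
Definition qclose (n : nat) (x y : Qp) : Prop := in_pnZp n (qadd y (qopp x)).

Definition vec := nat -> Qp.
Definition vzero : vec := fun _ => qzero.
Definition vadd (u v : vec) : vec := fun i => qadd (u i) (v i).
Definition vzscale (c : Zp) (u : vec) : vec := fun i => qzscale c (u i).
Definition vqscale (c : Qp) (u : vec) : vec := fun i => qmul c (u i).

Definition XP (P : seq nat) (xi : vec) : Prop := forall j, j \notin P -> integral (xi j).
Definition QpN (xi : vec) : Prop := exists P : seq nat, XP P xi.

(* A /\ X_P is open in X_P for the product topology *)
Definition open_in_XP (P : seq nat) (A : vec -> Prop) : Prop :=
  forall xi, XP P xi -> A xi ->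
    exists (F : seq nat) (n : nat), forall eta, XP P eta ->
      (forall i, i \in F -> qclose n (xi i) (eta i)) -> A eta.
Definition tau_open (A : vec -> Prop) : Prop := forall P : seq nat, open_in_XP P A.

Definition bmap := vec -> vec.
Definition tau_continuous (f : bmap) : Prop :=
  forall A, tau_open A -> tau_open (fun xi => QpN xi /\ A (f xi)).

Definition inB (f : bmap) : Prop :=
  [/\ forall xi, QpN xi -> QpN (f xi),
      forall xi eta, QpN xi -> QpN eta -> f (vadd xi eta) = vadd (f xi) (f eta),
      forall c xi, QpN xi -> f (vzscale c xi) = vzscale c (f xi)
    & tau_continuous f].

(* equality in B: agreement on Q_p(N) *)
Definition eqB (f g : bmap) : Prop := forall xi, QpN xi -> f xi = g xi.
Definition idB : bmap := id.
Definition zeroB : bmap := fun _ => vzero.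
Definition idempotentB (f : bmap) : Prop := eqB (fun xi => f (f xi)) f.

Definition image_findim (f : bmap) : Prop :=
  exists (d : nat) (v : 'I_d -> vec),
    (forall i, exists xi, QpN xi /\ v i = f xi) /\
    forall xi, QpN xi -> exists c : 'I_d -> Qp,
      f xi = \big[vadd/vzero]_(i < d) vqscale (c i) (v i).

Definition mx (m n : nat) := 'I_m -> 'I_n -> bmap.
Definition mx_inB m n (x : mx m n) : Prop := forall i j, inB (x i j).
Definition mxmul m n l (x : mx m n) (y : mx n l) : mx m l :=
  fun i j xi => \big[vadd/vzero]_(k < n) x i k (y k j xi).
Definition mx_eq m n (x y : mx m n) : Prop := forall i j, eqB (x i j) (y i j).
Definition dsum_id k (e : mx k k) (n : nat) : mx (k + n) (k + n) :=
  fun i j => match split i, split j with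
             | inl a, inl b => e a b
             | inr a, inr b => if a == b then idB else zeroB
             | _, _ => zeroB
             end.
Definition mvn_equiv k l (e : mx k k) (g : mx l l) : Prop :=
  exists (x : mx k l) (y : mx l k),
    [/\ mx_inB x, mx_inB y, mx_eq (mxmul x y) e & mx_eq (mxmul y x) g].
(* stable equivalence: e (+) 1_n ~ g (+) 1_n for some n, i.e. [e] = [g] in K_0(B) *)
Definition stably_equiv k l (e : mx k k) (g : mx l l) : Prop :=
  exists n, mvn_equiv (@dsum_id k e n) (@dsum_id l g n).

Definition mx1 (f : bmap) : mx 1 1 := fun _ _ => f.

End Padic.
Arguments dsum_id [p k] e n _ _ _ _.

(* Let W be the image of f, a finite-dimensional space spanned by the vectors f(e_i).
   A maximal nonsingular minor of the matrix (f(e_i)_j) selects r coordinates c_a and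
   vectors b_a in W with (b_a)_(c_l) = delta_al.  By the Schur complement every f(e_i),
   hence (by continuity of f, approximating x by its truncations) every f x, equals
   sum_a (f x)_(c_a) b_a.  So f = emb o coord, where coord x = ((f x)_(c_a))_a placed in
   the first r coordinates, emb w = sum_a w_a b_a, and coord o emb is the identity on
   them.  With the shifts S, T by r, for which T S = 1 and S T = 1 - (projection on the
   first r coordinates), the matrices [[0, emb], [0, T]] and [[0, 0], [coord, S]] are
   continuous and exhibit f (+) 1 ~ 0 (+) 1. *)

From mathcomp Require Import all_boot.
From HB Require Import structures.
From mathcomp Require Import ssralg matrix mxalgebra boolp zify ring.
Set Implicit Arguments. Unset Strict Implicit. Unset Printing Implicit Defensive.

(* We write p = q.+2: every prime has this form, and [digit q.+2] is then ['I_q.+2]. *)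
Section ZpRing.
Variable q : nat.
Local Notation p := q.+2.
Local Notation Z := (Zp p).

Lemma expp_gt0 n : 0 < p ^ n.
Proof. by rewrite expn_gt0. Qed.

Lemma ltn_digit (d : digit p) : d < p.
Proof. by case: d. Qed.

Lemma trunc0 (a : Z) : trunc a 0 = 0.
Proof. by rewrite /trunc big_ord0. Qed.

Lemma truncS (a : Z) n : trunc a n.+1 = trunc a n + a n * p ^ n.
Proof. by rewrite /trunc big_ord_recr. Qed.

Lemma ltn_trunc (a : Z) n : trunc a n < p ^ n.
Proof.
elim: n => [|n IH]; first by rewrite trunc0.
rewrite truncS expnS; have := ltn_digit (a n).
by move: (a n : nat) => d Hd; nia.
Qed.

Lemma modn_trunc (a : Z) m n : m <= n -> trunc a n %% p ^ m = trunc a m.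
Proof.
elim: n => [|n IH]; first by rewrite leqn0 => /eqP ->; rewrite trunc0 mod0n.
rewrite leq_eqVlt => /orP [/eqP ->|Hm]; first by rewrite modn_small // ltn_trunc.
have E : p ^ n = p ^ (n - m) * p ^ m by rewrite -expnD subnK.
by rewrite truncS E mulnA addnC modnMDl IH.
Qed.

Lemma trunc_inj (a b : Z) : (forall n, trunc a n = trunc b n) -> a = b.
Proof.
move=> H; apply: funext => i; apply: val_inj => /=.
have := H i.+1; rewrite !truncS H => /eqP.
by rewrite eqn_add2l eqn_pmul2r ?expp_gt0 // => /eqP.
Qed.

Lemma trunc_of_trunc (t : nat -> nat) :
  (forall n, t n < p ^ n) -> (forall n, t n.+1 %% p ^ n = t n) ->
  forall n, trunc (of_trunc p t) n = t n.
Proof.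
move=> Hlt Hco; elim=> [|n IH].
  by rewrite trunc0; have := Hlt 0; rewrite expn0 ltnS leqn0 => /eqP ->.
rewrite truncS IH /of_trunc /mkdigit /=.
have Hq : t n.+1 %/ p ^ n < p by rewrite ltn_divLR ?expp_gt0 // -expnS.
rewrite inordK; last by rewrite ltn_pmod.
by rewrite (modn_small Hq) -{1}(Hco n) addnC -divn_eq.
Qed.

Lemma trunc_of_mod (g : nat -> nat) :
  (forall n, g n.+1 = g n %[mod p ^ n]) ->
  forall n, trunc (of_trunc p (fun n => g n %% p ^ n)) n = g n %% p ^ n.
Proof.
move=> Hg; apply: trunc_of_trunc => n; first by rewrite ltn_pmod ?expp_gt0.
by rewrite modn_dvdm ?Hg // expnS dvdn_mull.
Qed.

Lemma trunc_zzero n : trunc (zzero p) n = 0.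
Proof. by rewrite /trunc big1. Qed.

Lemma trunc_zone n : trunc (zone p) n = 1 %% p ^ n.
Proof. exact: trunc_of_mod. Qed.

Lemma trunc_zadd (a b : Z) n : trunc (zadd a b) n = (trunc a n + trunc b n) %% p ^ n.
Proof.
apply: (@trunc_of_mod (fun n => trunc a n + trunc b n)) => k.
by rewrite -modnDm !modn_trunc // modnDm.
Qed.

Lemma trunc_zmul (a b : Z) n : trunc (zmul a b) n = (trunc a n * trunc b n) %% p ^ n.
Proof.
apply: (@trunc_of_mod (fun n => trunc a n * trunc b n)) => k.
by rewrite -modnMm !modn_trunc // modnMm.
Qed.

Lemma trunc_zopp (a : Z) n : trunc (zopp a) n = (p ^ n - trunc a n) %% p ^ n.
Proof.
apply: (@trunc_of_mod (fun n => p ^ n - trunc a n)) => k.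
have Hd := ltn_digit (a k); have Ht := ltn_trunc a k.
rewrite truncS expnS.
have -> : p * p ^ k - (trunc a k + a k * p ^ k) = (p - (a k).+1) * p ^ k + (p ^ k - trunc a k).
  by move: (trunc a k) (a k : nat) (p ^ k) Hd Ht => t d P; nia.
by rewrite modnMDl.
Qed.

Lemma zaddA : associative (@zadd p).
Proof. by move=> a b c; apply: trunc_inj => n; rewrite !trunc_zadd modnDml modnDmr addnA. Qed.

Lemma zaddC : commutative (@zadd p).
Proof. by move=> a b; apply: trunc_inj => n; rewrite !trunc_zadd addnC. Qed.

Lemma zadd0 : left_id (zzero p) (@zadd p).
Proof.
by move=> a; apply: trunc_inj => n; rewrite trunc_zadd trunc_zzero modn_small // ltn_trunc.
Qed.

Lemma zaddN : left_inverse (zzero p) (@zopp p) (@zadd p).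
Proof.
move=> a; apply: trunc_inj => n.
by rewrite trunc_zadd trunc_zopp trunc_zzero modnDml subnK ?modnn // ltnW ?ltn_trunc.
Qed.

Lemma zmulA : associative (@zmul p).
Proof. by move=> a b c; apply: trunc_inj => n; rewrite !trunc_zmul modnMml modnMmr mulnA. Qed.

Lemma zmulC : commutative (@zmul p).
Proof. by move=> a b; apply: trunc_inj => n; rewrite !trunc_zmul mulnC. Qed.

Lemma zmul1 : left_id (zone p) (@zmul p).
Proof.
move=> a; apply: trunc_inj => n.
by rewrite trunc_zmul trunc_zone modnMml mul1n modn_small // ltn_trunc.
Qed.

Lemma zmulDl : left_distributive (@zmul p) (@zadd p).
Proof.
move=> a b c; apply: trunc_inj => n.
by rewrite !trunc_zmul !trunc_zadd !trunc_zmul modnMml mulnDl modnDm.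
Qed.

Lemma zone_neq0 : zone p <> zzero p.
Proof. by move/(congr1 (@trunc p ^~ 1)); rewrite trunc_zone trunc_zzero expn1 modn_small. Qed.

End ZpRing.

HB.instance Definition _ (q : nat) := gen_eqMixin (Zp q.+2).
HB.instance Definition _ (q : nat) := gen_choiceMixin (Zp q.+2).
HB.instance Definition _ (q : nat) :=
  GRing.isZmodule.Build (Zp q.+2) (@zaddA q) (@zaddC q) (@zadd0 q) (@zaddN q).
HB.instance Definition _ (q : nat) :=
  GRing.Zmodule_isComNzRing.Build (Zp q.+2) (@zmulA q) (@zmulC q) (@zmul1 q) (@zmulDl q)
    (introN eqP (@zone_neq0 q)).

Import GRing.Theory.

Section ZpShift.
Variable q : nat.
Local Notation p := q.+2.
Local Notation Z := (Zp p).

Lemma trunc_zshift_small (a : Z) m n : n <= m -> trunc (zshift m a) n = 0.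
Proof.
by move=> Hn; rewrite /trunc big1 // => i _; rewrite /zshift (leq_trans (ltn_ord i) Hn).
Qed.

Lemma trunc_zshift_addn (a : Z) m k : trunc (zshift m a) (m + k) = p ^ m * trunc a k.
Proof.
elim: k => [|k IH]; first by rewrite addn0 trunc0 muln0 trunc_zshift_small.
rewrite addnS !truncS IH /zshift ltnNge leq_addr /= addKn mulnDr expnD.
by rewrite mulnCA.
Qed.

Lemma trunc_zshift (a : Z) m n : trunc (zshift m a) n = (p ^ m * trunc a n) %% p ^ n.
Proof.
case: (leqP n m) => Hnm.
  by rewrite trunc_zshift_small //; apply/esym/eqP/dvdn_mulr; rewrite dvdn_exp2l.
have [k ->] : exists k, n = m + k by exists (n - m); rewrite subnKC // ltnW.
by rewrite trunc_zshift_addn expnD -muln_modr modn_trunc // leq_addl.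
Qed.

Definition zpow (m : nat) : Z := zshift m 1%R.

Lemma trunc_zpow m n : trunc (zpow m) n = p ^ m %% p ^ n.
Proof.
rewrite trunc_zshift trunc_zone.
by case: n => [|n]; rewrite ?expn0 ?modn1 // (@modn_small 1) ?muln1 // -{1}(expn0 p) ltn_exp2l.
Qed.

Lemma zshiftE (a : Z) m : zshift m a = (zpow m * a)%R.
Proof.
apply: trunc_inj => n; rewrite [RHS]trunc_zmul trunc_zpow !trunc_zshift.
by rewrite modnMml.
Qed.

Lemma zshift_addn (a : Z) m n : zshift (m + n) a = zshift m (zshift n a).
Proof.
apply: funext => i; rewrite /zshift.
case: (ltnP i m) => H1; first by rewrite ifT //; lia.
case: (ltnP (i - m) n) => H2; first by rewrite ifT //; lia.
by rewrite ifF ?subnDA //; apply/negbTE; rewrite -leqNgt; lia.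
Qed.

Lemma zpow0 : zpow 0 = 1%R.
Proof. by apply: trunc_inj => n; rewrite trunc_zpow expn0 trunc_zone. Qed.

Lemma zpowD m n : zpow (m + n) = (zpow m * zpow n)%R.
Proof. by rewrite /zpow zshift_addn zshiftE. Qed.

Lemma zshift0 (a : Z) : zshift 0 a = a.
Proof. by rewrite zshiftE zpow0 mul1r. Qed.

Lemma zshift_inj m : injective (@zshift p m).
Proof.
move=> a b /(congr1 (fun c : Z => c (_ + m))) E; apply: funext => i.
by have := E i; rewrite /zshift ltnNge leq_addl /= addnK.
Qed.

Lemma zshift_digit (a : Z) m i : i < m -> zshift m a i = ord0.
Proof. by rewrite /zshift => ->. Qed.

Lemma Zp_valuation (a : Z) : a != 0%R -> exists m (u : Z), u 0 != ord0 /\ a = zshift m u.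
Proof.
move=> Ha; have ex_digit : exists i, a i != ord0.
  apply: contrapT => Hnone; move/eqP: Ha; apply; apply/funext => i.
  by apply/eqP; apply: contrapT => Hi; apply: Hnone; exists i; apply/negP.
case: (ex_minnP ex_digit) => m Hm Hmin.
exists m, (fun i => a (i + m)); split => //; apply: funext => i; rewrite /zshift.
case: ltnP => Hi; last by rewrite subnK.
by apply/eqP; apply: contraTT Hi => /Hmin; rewrite -leqNgt.
Qed.

End ZpShift.
Arguments zpow {q} m.

Lemma modn_inv_uniq (t x y P : nat) : x < P -> y < P ->
  t * x = 1 %[mod P] -> t * y = 1 %[mod P] -> x = y.
Proof.
move=> Hx Hy Ex Ey; rewrite -(modn_small Hx) -(modn_small Hy).
transitivity ((x * ((t * y) %% P)) %% P); first by rewrite Ey modnMmr muln1.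
by rewrite modnMmr mulnA (mulnC x t) -modnMml Ex modnMml mul1n.
Qed.

Section ZpUnit.
Variable q : nat.
Local Notation p := q.+2.
Local Notation Z := (Zp p).
Hypothesis p_prime : prime p.

Lemma modn_inv_exists (t n : nat) : ~~ (p %| t) ->
  exists x, (x < p ^ n) && (t * x == 1 %[mod p ^ n]).
Proof.
move=> Ht; case: n => [|n]; first by exists 0; rewrite expn0 !modn1.
have Hc : coprime t (p ^ n.+1) by apply: coprimeXr; rewrite coprime_sym prime_coprime.
have Ht0 : 0 < t by case: t Ht Hc => //; rewrite dvdn0.
move/(coprimeP _ Ht0): Hc => [[u1 u2] /= Hu].
exists (u1 %% p ^ n.+1); rewrite ltn_pmod ?expp_gt0 //= modnMmr mulnC.
have -> : u1 * t = 1 + u2 * p ^ n.+1.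
  have Hpos : u2 * p ^ n.+1 < u1 * t by rewrite -subn_gt0 Hu.
  by rewrite -Hu subnK // ltnW.
by rewrite addnC modnMDl.
Qed.

(* A digit stream whose first digit is nonzero is a unit: its inverse is assembled
   from the inverses of its truncations, which are coherent by uniqueness. *)
Lemma Zp_unit (u : Z) : u 0 != ord0 -> exists w : Z, (u * w)%R = 1%R.
Proof.
move=> Hu.
have trunc_ndvd n : ~~ (p %| trunc u n.+1).
  rewrite /dvdn -{2}(expn1 p) modn_trunc // truncS trunc0 expn0 muln1.
  by apply: contra Hu => /eqP H; apply/eqP/val_inj.
have inv_ex n : exists x, (x < p ^ n) && (trunc u n * x == 1 %[mod p ^ n]).
  by case: n => [|n]; [exists 0; rewrite expn0 !modn1 | exact: modn_inv_exists].
pose t n := xchoose (inv_ex n).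
have [t_lt t_inv] : (forall n, t n < p ^ n) /\ (forall n, trunc u n * t n = 1 %[mod p ^ n]).
  by split=> n; case/andP: (xchooseP (inv_ex n)) => // _ /eqP.
have trunc_t : forall n, trunc (of_trunc p t) n = t n.
  apply: trunc_of_trunc => // n.
  apply: (@modn_inv_uniq (trunc u n) _ _ (p ^ n)); rewrite ?ltn_pmod ?expp_gt0 //.
  have dvd_pn : p ^ n %| p ^ n.+1 by rewrite expnS dvdn_mull.
  by rewrite modnMmr -(@modn_trunc _ u n n.+1) // modnMml -(modn_dvdm _ dvd_pn) t_inv modn_dvdm.
exists (of_trunc p t); apply: trunc_inj => n.
by rewrite trunc_zmul trunc_t trunc_zone.
Qed.

End ZpUnit.

Local Open Scope ring_scope.

Section QpRing.
Variable q : nat.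
Local Notation p := q.+2.
Local Notation Z := (Zp p).
Local Notation Q := (Qp p).

Lemma qnormP k (a : Z) :
  ((qnorm k a).1 <= k)%N /\ a = zshift (k - (qnorm k a).1) (qnorm k a).2.
Proof.
elim: k a => [|k IH] a /=; first by rewrite zshift0.
case: eqP => Ha0 /=; last by rewrite subnn zshift0.
have [le_k Ea] := IH (fun i => a i.+1); split; first exact: leqW.
rewrite subSn // -[(_ - _).+1]add1n zshift_addn -Ea.
by apply: funext => -[|i] //=; rewrite /zshift /= subn1.
Qed.

(* [qclear N x] is p^N x as a p-adic integer, meaningful when [qden x <= N]; all ring
   identities in Q_p are proved by clearing denominators this way. *)
Definition qclear (N : nat) (x : Q) : Z := zshift (N - qden x) (qnum x).

Lemma qden_mkQ k (a : Z) : (qden (mkQ k a) <= k)%N.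
Proof. by have [] := qnormP k a. Qed.

Lemma qclear_mkQ N k (a : Z) : (k <= N)%N -> qclear N (mkQ k a) = zshift (N - k) a.
Proof.
move=> Hk; have [le_k Ea] := qnormP k a.
rewrite /qclear /qden /qnum /= [in RHS]Ea -zshift_addn.
by have -> : (N - (qnorm k a).1 = N - k + (k - (qnorm k a).1))%N by lia.
Qed.

Lemma Qp_ext (x y : Q) : qden x = qden y -> qnum x = qnum y -> x = y.
Proof.
case: x y => [[k a] Hx] [[l b] Hy]; rewrite /qden /qnum /= => Ek Ea.
by subst; congr exist; exact: bool_irrelevance.
Qed.

Lemma qnormal_digit (x : Q) : qden x != 0%N -> qnum x 0 != ord0.
Proof. by case: x => [[k a] /=]; rewrite /qnormal /qden /qnum /= => /orP[->|]. Qed.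

Lemma qclear_inj_le (x y : Q) N : (qden x <= qden y <= N)%N -> qclear N x = qclear N y -> x = y.
Proof.
case/andP=> Hxy HyN; rewrite /qclear.
have -> : (N - qden x = (N - qden y) + (qden y - qden x))%N by lia.
rewrite zshift_addn => /zshift_inj E.
have [Hd|Hd] := posnP (qden y - qden x).
  by apply: Qp_ext; [lia | rewrite -E Hd zshift0].
have /qnormal_digit : qden y != 0%N by lia.
by rewrite -E zshift_digit ?eqxx.
Qed.

Lemma qclear_inj (x y : Q) N : (qden x <= N)%N -> (qden y <= N)%N ->
  qclear N x = qclear N y -> x = y.
Proof.
move=> Hx Hy; case: (leqP (qden x) (qden y)) => H; first by apply: qclear_inj_le; rewrite H.
by move=> /esym E; apply/esym/(qclear_inj_le _ E); rewrite Hx ltnW.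
Qed.

Lemma qden_add (x y : Q) : (qden (qadd x y) <= qden x + qden y)%N.
Proof. exact: qden_mkQ. Qed.
Lemma qden_opp (x : Q) : (qden (qopp x) <= qden x)%N.
Proof. exact: qden_mkQ. Qed.
Lemma qden_mul (x y : Q) : (qden (qmul x y) <= qden x + qden y)%N.
Proof. exact: qden_mkQ. Qed.
Lemma qden_zero : qden (qzero p) = 0%N.
Proof. by []. Qed.
Lemma qden_one : qden (qone p) = 0%N.
Proof. by []. Qed.

Lemma qclear_add N (x y : Q) : (qden x + qden y <= N)%N ->
  qclear N (qadd x y) = qclear N x + qclear N y.
Proof.
move=> H; rewrite /qadd qclear_mkQ //.
change (zadd ?a ?b) with (a + b).
rewrite /qclear !zshiftE mulrDr !mulrA -!zpowD.
have -> : (N - (qden x + qden y) + qden y = N - qden x)%N by lia.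
by have -> : (N - (qden x + qden y) + qden x = N - qden y)%N by lia.
Qed.

Lemma qclear_opp N (x : Q) : (qden x <= N)%N -> qclear N (qopp x) = - qclear N x.
Proof.
move=> H; rewrite /qopp qclear_mkQ //; change (zopp ?a) with (- a).
by rewrite /qclear !zshiftE mulrN.
Qed.

Lemma qclear_mul N M (x y : Q) : (qden x <= N)%N -> (qden y <= M)%N ->
  qclear (N + M) (qmul x y) = qclear N x * qclear M y.
Proof.
move=> Hx Hy; rewrite /qmul qclear_mkQ; last by lia.
change (zmul ?a ?b) with (a * b).
rewrite /qclear !zshiftE mulrACA -zpowD.
by have -> : (N + M - (qden x + qden y) = N - qden x + (M - qden y))%N by lia.
Qed.

Lemma qclear_zero N : qclear N (qzero p) = 0.
Proof. by rewrite qclear_mkQ // zshiftE mulr0. Qed.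

Lemma qclear_one N : qclear N (qone p) = zpow N.
Proof. by rewrite qclear_mkQ // subn0 zshiftE mulr1. Qed.

Lemma qaddA : associative (@qadd p).
Proof.
move=> x y z; have := qden_add x y; have := qden_add y z.
have := qden_add (qadd x y) z; have := qden_add x (qadd y z) => *.
by apply: (@qclear_inj _ _ (qden x + qden y + qden z)); rewrite ?qclear_add ?addrA //; lia.
Qed.

Lemma qaddC : commutative (@qadd p).
Proof.
move=> x y; have := qden_add x y; have := qden_add y x => *.
by apply: (@qclear_inj _ _ (qden x + qden y)); rewrite ?qclear_add ?(addrC (qclear _ x)) //; lia.
Qed.

Lemma qadd0 : left_id (qzero p) (@qadd p).
Proof.
move=> x; have := qden_add (qzero p) x; rewrite qden_zero => *.
by apply: (@qclear_inj _ _ (qden x)); rewrite ?qclear_add ?qclear_zero ?add0r ?qden_zero.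
Qed.

Lemma qaddN : left_inverse (qzero p) (@qopp p) (@qadd p).
Proof.
move=> x; have := qden_add (qopp x) x; have := qden_opp x => *.
apply: (@qclear_inj _ _ (qden x + qden x)); rewrite ?qden_zero //; first by lia.
by rewrite qclear_add ?qclear_opp ?qclear_zero ?addNr //; lia.
Qed.

Lemma qmulA : associative (@qmul p).
Proof.
move=> x y z; have := qden_mul x y; have := qden_mul y z.
have := qden_mul (qmul x y) z; have := qden_mul x (qmul y z) => *.
apply: (@qclear_inj _ _ (qden x + (qden y + qden z))); try lia.
by rewrite qclear_mul // qclear_mul // addnA qclear_mul // qclear_mul // mulrA.
Qed.

Lemma qmulC : commutative (@qmul p).
Proof.
move=> x y; have := qden_mul x y; have := qden_mul y x => *.
apply: (@qclear_inj _ _ (qden x + qden y)); try lia.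
by rewrite qclear_mul // addnC qclear_mul // mulrC.
Qed.

Lemma qmul1 : left_id (qone p) (@qmul p).
Proof.
move=> x; have := qden_mul (qone p) x; rewrite qden_one => *.
apply: (@qclear_inj _ _ (qden x)) => //.
by rewrite -[qden x]add0n qclear_mul ?qden_one // qclear_one zpow0 mul1r.
Qed.

Lemma qmulDl : left_distributive (@qmul p) (@qadd p).
Proof.
move=> x y z; have := qden_mul (qadd x y) z; have := qden_add x y.
have := qden_mul x z; have := qden_mul y z; have := qden_add (qmul x z) (qmul y z) => *.
apply: (@qclear_inj _ _ (qden x + qden y + qden z + qden z)); try lia.
by rewrite qclear_mul ?qclear_add ?qclear_mul ?mulrDl //; lia.
Qed.

Lemma qone_neq0 : qone p <> qzero p.
Proof.
by move/(congr1 (qclear 0)); rewrite qclear_one qclear_zero zpow0 => /eqP; rewrite oner_eq0.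
Qed.

End QpRing.

HB.instance Definition _ (q : nat) := gen_eqMixin (Qp q.+2).
HB.instance Definition _ (q : nat) := gen_choiceMixin (Qp q.+2).
HB.instance Definition _ (q : nat) :=
  GRing.isZmodule.Build (Qp q.+2) (@qaddA q) (@qaddC q) (@qadd0 q) (@qaddN q).
HB.instance Definition _ (q : nat) :=
  GRing.Zmodule_isComNzRing.Build (Qp q.+2) (@qmulA q) (@qmulC q) (@qmul1 q) (@qmulDl q)
    (introN eqP (@qone_neq0 q)).

Section QpInv.
Variable q : nat.
Local Notation p := q.+2.
Local Notation Z := (Zp p).
Local Notation Q := (Qp p).

(* If [qnum x = p^v u] with [u * w = 1], then [x^-1 = p^-v (p^(qden x) w)]. *)
Definition qinv (x : Q) : Q :=
  if pselect (exists t : nat * Z * Z, qnum x = zshift t.1.1 t.1.2 /\ t.1.2 * t.2 = 1)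
    is left H then let t := proj1_sig (cid H) in mkQ t.1.1 (zshift (qden x) t.2)
  else 0.

Lemma qinv0 : qinv 0 = 0.
Proof.
rewrite /qinv; case: pselect => // H; case: (cid H) => [[[v u] w] /= [Eu Euw]].
have u0 : u = 0 by apply: (@zshift_inj _ v); rewrite -Eu zshiftE mulr0.
by move: Euw; rewrite u0 mul0r => /esym/eqP; rewrite oner_eq0.
Qed.

Lemma qnum_eq0 (x : Q) : qnum x = 0 -> x = 0.
Proof.
move=> Hx; apply: Qp_ext; rewrite ?qden_zero //.
apply/eqP; apply: contraT => /qnormal_digit.
by rewrite Hx.
Qed.

Hypothesis p_prime : prime p.

Lemma qmulV (x : Q) : x != 0 -> qmul (qinv x) x = qone p.
Proof.
move=> Hx.
have [v [u [u0 Eu]]] : exists v (u : Z), u 0 != ord0 /\ qnum x = zshift v u.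
  by apply: Zp_valuation; apply: contra Hx => /eqP/qnum_eq0 ->.
have [w Euw] := Zp_unit p_prime u0.
rewrite /qinv; case: pselect => [H|[]]; last by exists (v, u, w).
case: (cid H) => [[[v' u'] w'] /= [Eu' Euw']].
have h1 := qden_mkQ v' (zshift (qden x) w').
have h2 := qden_mul (mkQ v' (zshift (qden x) w')) x.
apply: (@qclear_inj _ _ _ (v' + qden x + qden x)%N); rewrite ?qden_one; try lia.
rewrite qclear_mul //; last by lia.
rewrite qclear_mkQ; last by lia.
rewrite qclear_one /qclear subnn zshift0 Eu' !zshiftE.
have -> : (v' + qden x - v' = qden x)%N by lia.
transitivity (zpow (qden x) * zpow (qden x) * zpow v' * (u' * w')); first by ring.
by rewrite Euw' mulr1 -!zpowD addnC addnA.
Qed.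

End QpInv.

Section QpBalls.
Variable q : nat.
Local Notation p := q.+2.
Local Notation Z := (Zp p).
Local Notation Q := (Qp p).

Definition zQ (c : Z) : Q := mkQ 0 c.

Lemma qden_zQ c : qden (zQ c) = 0%N.
Proof. by []. Qed.

Lemma qclear_zQ N c : qclear N (zQ c) = zpow N * c.
Proof. by rewrite qclear_mkQ // subn0 zshiftE. Qed.

Lemma zQD a b : zQ (a + b) = zQ a + zQ b.
Proof.
apply: (@qclear_inj _ _ _ 0%N) => //.
by rewrite [zQ a + _]/(qadd _ _) qclear_add ?qden_zQ // !qclear_zQ zpow0 !mul1r.
Qed.

Lemma zQM a b : zQ (a * b) = zQ a * zQ b.
Proof. by []. Qed.

Lemma zQN a : zQ (- a) = - zQ a.
Proof. by apply/eqP; rewrite -addr_eq0 -zQD addNr. Qed.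

Definition pQ : Q := zQ (zpow 1).

Lemma zQ_zpow n : zQ (zpow n) = pQ ^+ n.
Proof. by elim: n => [|n IH]; rewrite ?zpow0 // -[n.+1]addn1 zpowD zQM IH exprD expr1. Qed.

Lemma zQ_qnum (x : Q) : zQ (qnum x) = pQ ^+ qden x * x.
Proof.
have := qden_mul (pQ ^+ qden x) x; rewrite -zQ_zpow qden_zQ add0n => h.
apply: (@qclear_inj _ _ _ (qden x)); rewrite ?qden_zQ //.
rewrite [zQ _ * _]/(qmul _ _) -{2}[qden x]add0n qclear_mul ?qden_zQ //.
by rewrite !qclear_zQ /qclear subnn zshift0 zpow0 mul1r.
Qed.

Lemma pQ_neq0 : pQ != 0.
Proof.
apply/eqP => /(congr1 (qclear 0)); rewrite qclear_zQ zpow0 mul1r [0]/(qzero p) qclear_zero.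
move/(congr1 (@trunc p ^~ 2)); rewrite trunc_zpow trunc_zzero modn_small //.
by rewrite ltn_exp2l.
Qed.

Definition in_pZ (n : nat) (x : Q) := exists b : Z, x = pQ ^+ n * zQ b.

Lemma integralE (x : Q) : integral x <-> in_pZ 0 x.
Proof.
split=> [Hx|[b ->]]; last by rewrite expr0 mul1r /integral qden_zQ.
by exists (qnum x); rewrite zQ_qnum Hx !expr0 !mul1r.
Qed.

Lemma in_pnZpE n (x : Q) : in_pnZp n x <-> in_pZ n x.
Proof.
split=> [[Hx Hdig]|[b ->]]; last first.
  rewrite -zQ_zpow -zQM -zshiftE; split=> [|i Hi]; first exact: qden_zQ.
  exact: zshift_digit.
exists (fun i => qnum x (i + n)%N).
have {1}<- : zQ (qnum x) = x by rewrite zQ_qnum Hx expr0 mul1r.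
rewrite -zQ_zpow -zQM -zshiftE; congr zQ.
apply: funext => i; rewrite /zshift; case: ltnP => Hi; first by rewrite Hdig.
by rewrite subnK.
Qed.

Lemma qcloseE n (x y : Q) : qclose n x y <-> in_pZ n (y - x).
Proof. exact: in_pnZpE. Qed.

Lemma in_pZ0 n : in_pZ n 0.
Proof. by exists 0; rewrite mulr0. Qed.

Lemma in_pZD n x y : in_pZ n x -> in_pZ n y -> in_pZ n (x + y).
Proof. by move=> [a ->] [b ->]; exists (a + b); rewrite zQD mulrDr. Qed.

Lemma in_pZN n x : in_pZ n x -> in_pZ n (- x).
Proof. by move=> [a ->]; exists (- a); rewrite zQN mulrN. Qed.

Lemma in_pZB n x y : in_pZ n x -> in_pZ n y -> in_pZ n (x - y).
Proof. by move=> Hx Hy; apply: in_pZD => //; apply: in_pZN. Qed.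

Lemma in_pZ_le m n x : (m <= n)%N -> in_pZ n x -> in_pZ m x.
Proof.
by move=> Hmn [a ->]; exists (zpow (n - m) * a); rewrite zQM zQ_zpow mulrA -exprD subnKC.
Qed.

Lemma in_pZ_scale n (c x : Q) : in_pZ (n + qden c) x -> in_pZ n (c * x).
Proof. by move=> [a ->]; exists (qnum c * a); rewrite zQM zQ_qnum exprD; ring. Qed.

Lemma in_pZ_eq0 (x : Q) : (forall n, in_pZ n x) -> x = 0.
Proof.
move=> Hx; apply: qnum_eq0; apply: funext => i.
by have /in_pnZpE[_] := Hx i.+1; apply.
Qed.

End QpBalls.

Section TauContinuity.
Variable q : nat.
Local Notation p := q.+2.
Local Notation V := (vec p).

Definition close_on (F : seq nat) (n : nat) (x y : V) :=
  forall i, i \in F -> in_pZ n (y i - x i).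

Lemma XPE P (x : V) : XP P x <-> forall j, j \notin P -> in_pZ 0 (x j).
Proof. by split=> H j Hj; apply/integralE; apply: H. Qed.

(* A concrete sufficient condition for tau-continuity: on each X_P, [g] lands in a
   single X_P' and is continuous for the product topologies. *)
Definition Xcontinuous (g : V -> V) :=
  forall P x, XP P x -> exists P', (forall y, XP P y -> XP P' (g y)) /\
    forall F n, exists F' n', forall y, XP P y -> close_on F' n' x y ->
      close_on F n (g x) (g y).

Lemma Xcontinuous_QpN g : Xcontinuous g -> forall x, QpN x -> QpN (g x).
Proof. by move=> Hg x [P HP]; have [P' [H _]] := Hg P x HP; exists P'; apply: H. Qed.

Lemma Xcontinuous_tau g : Xcontinuous g -> tau_continuous g.
Proof.
move=> Hg A HA P x HPx [_ HAx].
have [P' [HP' Hcl]] := Hg P x HPx.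
have [F [n Hn]] := HA P' (g x) (HP' x HPx) HAx.
have [F' [n' H']] := Hcl F n.
exists F', n' => y Hy Hc; split; first by exists P.
apply: Hn => [|i Hi]; first exact: HP'.
by apply/qcloseE; apply: H' => // j Hj; apply/qcloseE; apply: Hc.
Qed.

Lemma tau_open_ext (A B : V -> Prop) : (forall x, A x <-> B x) -> tau_open A -> tau_open B.
Proof.
move=> E HA P x Hx /E HBx; have [F [n H]] := HA P x Hx HBx.
by exists F, n => y Hy Hc; apply/E; apply: H.
Qed.

Lemma tau_continuous_comp (g h : V -> V) : tau_continuous g -> tau_continuous h ->
  (forall x, QpN x -> QpN (h x)) -> tau_continuous (g \o h).
Proof.
move=> Hg Hh hQ A HA; apply: tau_open_ext (Hh _ (Hg A HA)) => x.
by split=> [[? []]|[Hx ?]]; last split; try split; auto.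
Qed.

(* The converse direction at a point: preimages of the open sets
   [X_P' /\ close_on F n (g x)] are open. *)
Lemma tau_continuous_close g : tau_continuous g -> (forall x, QpN x -> QpN (g x)) ->
  forall P x, XP P x -> forall F n, exists F' n',
    forall y, XP P y -> close_on F' n' x y -> close_on F n (g x) (g y).
Proof.
move=> Hg gQ P x Hx F n.
have [P' HP'] := gQ x (ex_intro _ P Hx).
pose A z := XP P' z /\ close_on F n (g x) z.
have HA : tau_open A.
  move=> P0 z0 Hz0 [Az0P Az0F]; exists (F ++ P0), n => z Hz Hc.
  have close_z : close_on (F ++ P0) n z0 z by move=> j Hj; apply/qcloseE/Hc.
  split.
    apply/XPE => j Hj; have [Hj0|Hj0] := boolP (j \in P0); last by move/XPE: Hz; apply.
    rewrite -(subrK (z0 j) (z j)); apply: in_pZD; last by move/XPE: Az0P; apply.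
    by apply: (in_pZ_le (leq0n n)); apply: close_z; rewrite mem_cat Hj0 orbT.
  move=> i Hi; rewrite -(subrK (z0 i) (z i)) -addrA; apply: in_pZD; last exact: Az0F.
  by apply: close_z; rewrite mem_cat Hi.
have Agx : A (g x) by split=> // i _; rewrite subrr; exact: in_pZ0.
have [F' [n' H]] := Hg A HA P x Hx (conj (ex_intro _ P Hx) Agx).
exists F', n' => y Hy Hc.
by have [_ [_ ?]] := H y Hy (fun i Hi => proj2 (qcloseE _ _ _) (Hc i Hi)).
Qed.

End TauContinuity.

Section Operators.
Variable q : nat.
Local Notation p := q.+2.
Local Notation Q := (Qp p).
Local Notation V := (vec p).

Lemma vaddE (x y : V) i : vadd x y i = x i + y i. Proof. by []. Qed.
Lemma vzscaleE c (x : V) i : vzscale c x i = zQ c * x i. Proof. by []. Qed.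
Lemma vqscaleE c (x : V) i : vqscale c x i = c * x i. Proof. by []. Qed.
Lemma vzeroE i : vzero p i = 0. Proof. by []. Qed.

Lemma vadd0v (u : V) : vadd (vzero p) u = u.
Proof. by apply: funext => i; rewrite vaddE add0r. Qed.

Lemma vaddv0 (u : V) : vadd u (vzero p) = u.
Proof. by apply: funext => i; rewrite vaddE addr0. Qed.

Lemma big_vadd_eval n (w : 'I_n -> V) j :
  (\big[@vadd p/vzero p]_(i < n) w i) j = \sum_(i < n) w i j.
Proof. by rewrite (big_morph (fun w : V => w j) (id1 := 0) (op1 := +%R)). Qed.

Lemma QpN_finsupp (S : seq nat) (x : V) : (forall j, j \notin S -> x j = 0) -> QpN x.
Proof. by move=> H; exists S => j Hj; apply/integralE; rewrite H //; apply: in_pZ0. Qed.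

Lemma QpN_vzero : QpN (vzero p).
Proof. exact: (@QpN_finsupp [::]). Qed.

Definition unitv (i : nat) : V := fun j => (i == j)%:R.

Lemma QpN_scale_unitv c i : QpN (vqscale c (unitv i)).
Proof.
apply: (@QpN_finsupp [:: i]) => j; rewrite inE vqscaleE /unitv eq_sym => /negbTE ->.
by rewrite mulr0.
Qed.

Lemma QpN_unitv i : QpN (unitv i).
Proof. by apply: (@QpN_finsupp [:: i]) => j; rewrite inE /unitv eq_sym => /negbTE ->. Qed.

Definition vcomb m (c : 'I_m -> Q) (idx : 'I_m -> nat) : V :=
  fun j => \sum_(k < m) (if idx k == j then c k else 0).

Lemma QpN_vcomb m (c : 'I_m -> Q) idx : QpN (vcomb c idx).
Proof.
apply: (@QpN_finsupp (map idx (enum 'I_m))) => j Hj; rewrite /vcomb big1 // => k _.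
by case: eqP => // Ek; move: Hj; rewrite -Ek map_f ?mem_enum.
Qed.

Lemma vcomb_recr m (c : 'I_m.+1 -> Q) idx : vcomb c idx =
  vadd (vcomb (c \o widen_ord (leqnSn m)) (idx \o widen_ord (leqnSn m)))
       (vqscale (c ord_max) (unitv (idx ord_max))).
Proof.
apply: funext => j; rewrite /vcomb vaddE big_ord_recr /= vqscaleE /unitv.
by case: eqP; rewrite ?mulr1 ?mulr0.
Qed.

Definition vtrunc m (x : V) : V := vcomb (fun k : 'I_m => x k) val.

Lemma vtruncE m (x : V) j : vtrunc m x j = if (j < m)%N then x j else 0.
Proof.
rewrite /vtrunc /vcomb; case: ltnP => Hj.
  rewrite (bigD1 (Ordinal Hj)) //= eqxx big1 ?addr0 // => k /negbTE Hk.
  by case: eqP => // Ekj; move: Hk; rewrite -(inj_eq val_inj) /= Ekj eqxx.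
by rewrite big1 // => k _; case: eqP => // Ekj; move: Hj; rewrite -Ekj leqNgt ltn_ord.
Qed.

Definition vcomb_mx n m (M : 'M[Q]_(n, m)) (R : 'I_m -> nat) (w : V) : V :=
  vcomb (fun b => \sum_(a < n) w a * M a b) R.

Definition vshiftr r (x : V) : V := fun i => if (i < r)%N then 0 else x (i - r)%N.
Definition vshiftl r (x : V) : V := fun i => x (i + r)%N.
Definition vselect r (I : nat -> nat) (x : V) : V := fun i => if (i < r)%N then x (I i) else 0.

Lemma Xcontinuous_zero : Xcontinuous (fun _ => vzero p).
Proof.
move=> P x Hx; exists [::]; split; first by move=> y _ j _; apply/integralE/in_pZ0.
by move=> F n; exists [::], 0%N => y _ _ i _; rewrite subrr; apply: in_pZ0.
Qed.

Lemma Xcontinuous_vshiftr r : Xcontinuous (vshiftr r).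
Proof.
move=> P x Hx; exists [seq (j + r)%N | j <- P]; split.
  move=> y Hy i Hi; rewrite /vshiftr; case: ifP => H; first exact/integralE/in_pZ0.
  apply: Hy; apply: contra Hi => Hi; apply/mapP; exists (i - r)%N => //.
  by rewrite subnK // leqNgt H.
move=> F n; exists [seq (i - r)%N | i <- F], n => y Hy Hc i Hi; rewrite /vshiftr.
by case: ifP => H; [rewrite subrr; apply: in_pZ0 | apply: Hc; apply/mapP; exists i].
Qed.

Lemma Xcontinuous_vshiftl r : Xcontinuous (vshiftl r).
Proof.
move=> P x Hx; exists [seq (j - r)%N | j <- P]; split.
  move=> y Hy i Hi; apply: Hy; apply: contra Hi => Hi; apply/mapP.
  by exists (i + r)%N => //; rewrite addnK.
move=> F n; exists [seq (i + r)%N | i <- F], n => y Hy Hc i Hi.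
by apply: Hc; apply/mapP; exists i.
Qed.

Lemma Xcontinuous_vselect r I : Xcontinuous (vselect r I).
Proof.
move=> P x Hx; exists (iota 0 r); split.
  move=> y Hy i Hi; rewrite /vselect; case: ifP => H; last exact/integralE/in_pZ0.
  by move: Hi; rewrite mem_iota /= add0n H.
move=> F n; exists [seq I i | i <- iota 0 r], n => y Hy Hc i Hi; rewrite /vselect.
case: ifP => H; last by rewrite subrr; apply: in_pZ0.
by apply: Hc; apply/mapP; exists i => //; rewrite mem_iota add0n H.
Qed.

Lemma Xcontinuous_vcomb_mx n m (M : 'M[Q]_(n, m)) R : Xcontinuous (vcomb_mx M R).
Proof.
pose D := (\max_(a < n) \max_(b < m) qden (M a b))%N.
move=> P x Hx; exists (map R (enum 'I_m)); split.
  move=> y Hy i Hi; apply/integralE; rewrite /vcomb_mx /vcomb big1; first exact: in_pZ0.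
  by move=> b _; case: eqP => // Eb; move: Hi; rewrite -Eb map_f ?mem_enum.
move=> F k; exists (iota 0 n), (k + D)%N => y Hy Hc i Hi; rewrite /vcomb_mx /vcomb -sumrB.
apply: (big_ind (in_pZ k)); [exact: in_pZ0 | exact: in_pZD | move=> b _].
case: eqP => _; last by rewrite subrr; apply: in_pZ0.
rewrite -sumrB; apply: (big_ind (in_pZ k)); [exact: in_pZ0 | exact: in_pZD | move=> a _].
rewrite -mulrBl mulrC; apply: in_pZ_scale; apply: (@in_pZ_le _ _ (k + D)%N).
  by rewrite leq_add2l (leq_trans _ (leq_bigmax a)) // (leq_bigmax b).
by apply: Hc; rewrite mem_iota add0n ltn_ord.
Qed.

Lemma Xcontinuous_inB (g : V -> V) : Xcontinuous g ->
  (forall x y, g (vadd x y) = vadd (g x) (g y)) ->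
  (forall c x, g (vzscale c x) = vzscale c (g x)) -> inB g.
Proof.
move=> Hg gD gZ.
by split=> [|x y _ _|c x _|]; [exact: Xcontinuous_QpN | | | exact: Xcontinuous_tau].
Qed.

Lemma inB_comp (g h : V -> V) : inB g -> inB h -> inB (g \o h).
Proof.
move=> [gQ gD gZ gC] [hQ hD hZ hC]; split=> [x Hx|x y Hx Hy|c x Hx|] /=.
- exact/gQ/hQ.
- by rewrite hD // gD //; apply: hQ.
- by rewrite hZ // gZ //; apply: hQ.
- exact: tau_continuous_comp.
Qed.

Lemma inB_zero : inB (@zeroB p).
Proof.
apply: Xcontinuous_inB Xcontinuous_zero _ _ => [x y|c x]; apply: funext => i.
  by rewrite vaddE vzeroE addr0.
by rewrite vzscaleE vzeroE mulr0.
Qed.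

Lemma inB_vshiftr r : inB (vshiftr r).
Proof.
apply: Xcontinuous_inB (Xcontinuous_vshiftr r) _ _ => [x y|c x]; apply: funext => i;
  by rewrite /vshiftr ?vaddE ?vzscaleE; case: ifP; rewrite ?addr0 ?mulr0.
Qed.

Lemma inB_vshiftl r : inB (vshiftl r).
Proof. exact: Xcontinuous_inB (Xcontinuous_vshiftl r) _ _. Qed.

Lemma inB_vselect r I : inB (vselect r I).
Proof.
apply: Xcontinuous_inB (Xcontinuous_vselect r I) _ _ => [x y|c x]; apply: funext => i;
  by rewrite /vselect ?vaddE ?vzscaleE; case: ifP; rewrite ?addr0 ?mulr0.
Qed.

Lemma inB_vcomb_mx n m (M : 'M[Q]_(n, m)) R : inB (vcomb_mx M R).
Proof.
apply: Xcontinuous_inB (Xcontinuous_vcomb_mx M R) _ _ => [x y|c x]; apply: funext => i.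
  rewrite /vcomb_mx /vcomb vaddE -big_split; apply: eq_bigr => b _ /=.
  case: eqP => _; last by rewrite addr0.
  by rewrite -big_split; apply: eq_bigr => a _; rewrite vaddE mulrDl.
rewrite /vcomb_mx /vcomb vzscaleE mulr_sumr; apply: eq_bigr => b _ /=.
case: eqP => _; last by rewrite mulr0.
by rewrite mulr_sumr; apply: eq_bigr => a _; rewrite vzscaleE mulrA.
Qed.

End Operators.
Arguments unitv {q} i.
Arguments QpN_unitv {q} i.

Section BlockMatrices.
Variable q : nat.
Local Notation p := q.+2.

Definition mx2 (a b c d : bmap p) : mx p (1 + 1) (1 + 1) := fun i j =>
  if i == 0 :> nat then (if j == 0 :> nat then a else b) else (if j == 0 :> nat then c else d).

Definition bmap_add (g h : bmap p) : bmap p := fun x => vadd (g x) (h x).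

Lemma mxmul_mx2 (a b c d a' b' c' d' : bmap p) :
  mxmul (mx2 a b c d) (mx2 a' b' c' d') =
  mx2 (bmap_add (a \o a') (b \o c')) (bmap_add (a \o b') (b \o d'))
      (bmap_add (c \o a') (d \o c')) (bmap_add (c \o b') (d \o d')).
Proof.
apply: funext => i; apply: funext => j; apply: funext => x.
rewrite /mxmul (big_ord_recl 1) (big_ord_recl 0) big_ord0 /mx2 /bmap_add /=.
by rewrite vaddv0; case: ifP => _; case: ifP.
Qed.

Lemma dsum_id_mx2 (g : bmap p) : dsum_id (mx1 g) 1 = mx2 g (@zeroB p) (@zeroB p) (@idB p).
Proof.
apply: funext => i; apply: funext => j; rewrite /dsum_id /mx2.
by case: splitP => a Ha; case: splitP => b Hb; rewrite Ha Hb ?(ord1 a) ?(ord1 b).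
Qed.

End BlockMatrices.

Lemma det_schur (R : comUnitRingType) m n (A : 'M[R]_m) (B : 'M_(m, n)) (C : 'M_(n, m))
    (D : 'M_n) :
  A \in unitmx -> \det (block_mx A B C D) = \det A * \det (D - C *m invmx A *m B).
Proof.
move=> A_unit.
have -> : block_mx A B C D =
    block_mx 1%:M 0 (C *m invmx A) 1%:M *m block_mx A B 0 (D - C *m invmx A *m B).
  rewrite mulmx_block !mul1mx !mul0mx !addr0 -mulmxA mulVmx // mulmx1.
  by rewrite addrC subrK.
by rewrite det_mulmx det_lblock det_ublock !det1 !mul1r.
Qed.

Section ImageFactorization.
Variable q : nat.
Hypothesis p_prime : prime q.+2.
Local Notation p := q.+2.
Local Notation Q := (Qp p).
Local Notation V := (vec p).

Lemma qmulVf (x : Q) : x != 0 -> qinv x * x = 1.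
Proof. exact: qmulV. Qed.

HB.instance Definition _ := GRing.ComNzRing_isField.Build Q qmulVf (@qinv0 q).

Variable f : bmap p.
Hypothesis fQ : forall x, QpN x -> QpN (f x).
Hypothesis fD : forall x y, QpN x -> QpN y -> f (vadd x y) = vadd (f x) (f y).
Hypothesis fZ : forall c x, QpN x -> f (vzscale c x) = vzscale c (f x).

Lemma f_vzero : f (vzero p) = vzero p.
Proof.
have E c : vzscale c (vzero p) = vzero p by apply: funext => i; rewrite vzscaleE vzeroE mulr0.
rewrite -{1}(E 0) fZ; last exact: QpN_vzero.
by apply: funext => i; rewrite vzscaleE mul0r.
Qed.

(* Multiplying by [p^(qden c)] reduces Q_p-scaling to Z_p-scaling. *)
Lemma f_vqscale c (x : V) : QpN x -> QpN (vqscale c x) -> f (vqscale c x) = vqscale c (f x).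
Proof.
move=> Hx Hcx.
have E : vzscale (zpow (qden c)) (vqscale c x) = vzscale (qnum c) x.
  by apply: funext => i; rewrite !vzscaleE vqscaleE zQ_zpow zQ_qnum mulrA.
move/(congr1 f): E; rewrite !fZ // => /(congr1 (fun w => w _)) E; apply: funext => i.
move: (E i); rewrite !vzscaleE vqscaleE zQ_zpow zQ_qnum -mulrA.
by apply: mulfI; rewrite expf_neq0 ?pQ_neq0.
Qed.

Lemma f_vcomb m (c : 'I_m -> Q) idx j :
  f (vcomb c idx) j = \sum_(k < m) c k * f (unitv (idx k)) j.
Proof.
elim: m c idx => [|m IH] c idx.
  have -> : vcomb c idx = vzero p by apply: funext => i; rewrite /vcomb big_ord0.
  by rewrite f_vzero big_ord0.
rewrite vcomb_recr (fD (QpN_vcomb _ _) (QpN_scale_unitv _ _)) vaddE IH big_ord_recr /=.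
by rewrite (f_vqscale (QpN_unitv _) (QpN_scale_unitv _ _)).
Qed.

Variable d : nat.
Variable v : 'I_d -> V.
Hypothesis f_span : forall x, QpN x -> exists c : 'I_d -> Q,
  f x = \big[@vadd p/vzero p]_(i < d) vqscale (c i) (v i).

Definition fmx i j := f (unitv i) j.
Definition fminor k (R I : nat -> nat) : 'M[Q]_k := \matrix_(a < k, b < k) fmx (R a) (I b).
Definition has_minor k := exists R I, \det (fminor k R I) != 0.

Lemma has_minor_le_dim k : has_minor k -> (k <= d)%N.
Proof.
move=> [R [I det_neq0]].
pose C i := proj1_sig (cid (f_span (QpN_unitv i))).
have EC i : f (unitv i) = \big[@vadd p/vzero p]_(t < d) vqscale (C i t) (v t).
  exact: proj2_sig (cid (f_span (QpN_unitv i))).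
have E : fminor k R I = \matrix_(a < k, t < d) C (R a) t *m \matrix_(t < d, b < k) v t (I b).
  apply/matrixP => a b; rewrite !mxE /fmx EC big_vadd_eval.
  by apply: eq_bigr => t _; rewrite !mxE.
have := mxrank_unit (_ : fminor k R I \in unitmx); rewrite unitmxE unitfE => /(_ det_neq0).
by rewrite E => <-; rewrite (leq_trans (mxrankM_maxr _ _)) ?rank_leq_row.
Qed.

Lemma has_minor0 : has_minor 0.
Proof. by exists id, id; rewrite det_mx00 oner_neq0. Qed.

Definition frank : nat :=
  ex_maxn (ex_intro _ 0%N (asboolT has_minor0)) (fun k Hk => has_minor_le_dim (asboolW Hk)).

Lemma frank_minor : has_minor frank.
Proof. by rewrite /frank; case: ex_maxnP => k /asboolW. Qed.

Lemma frank_max k : has_minor k -> (k <= frank)%N.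
Proof. by rewrite /frank; case: ex_maxnP => k' _ Hmax /asboolT; apply: Hmax. Qed.

Definition mrow : nat -> nat := proj1_sig (cid frank_minor).
Definition mcol : nat -> nat := proj1_sig (cid (proj2_sig (cid frank_minor))).
Definition Amax := fminor frank mrow mcol.

Lemma det_Amax_neq0 : \det Amax != 0.
Proof. exact: proj2_sig (cid (proj2_sig (cid frank_minor))). Qed.

Lemma Amax_unit : Amax \in unitmx.
Proof. by rewrite unitmxE unitfE det_Amax_neq0. Qed.

Definition ibasis (a : 'I_frank) j := \sum_(b < frank) invmx Amax a b * fmx (mrow b) j.

Lemma ibasis_mcol (a l : 'I_frank) : ibasis a (mcol l) = (a == l)%:R.
Proof.
have := congr1 (fun M : 'M[Q]_frank => M a l) (mulVmx Amax_unit); rewrite !mxE => <-.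
by apply: eq_bigr => b _; rewrite !mxE.
Qed.

(* Bordering the maximal minor by row [i] and column [j] gives a singular matrix,
   whose Schur complement is the claimed relation. *)
Lemma fmx_factor i j : fmx i j = \sum_(a < frank) fmx i (mcol a) * ibasis a j.
Proof.
pose R' a := if (a < frank)%N then mrow a else i.
pose I' b := if (b < frank)%N then mcol b else j.
have det0 : \det (fminor (frank + 1) R' I') = 0.
  apply/eqP; apply: contraT => Hdet.
  by have := frank_max (ex_intro _ R' (ex_intro _ I' Hdet)); rewrite addn1 ltnn.
have E : fminor (frank + 1) R' I' = block_mx Amax (\matrix_(a < frank, b < 1) fmx (mrow a) j)
    (\matrix_(a < 1, b < frank) fmx i (mcol b)) (\matrix_(a < 1, b < 1) fmx i j).
  rewrite -[LHS]submxK; congr block_mx; apply/matrixP => a b;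
    rewrite !mxE /R' /I' /= ?(ord1 a) ?(ord1 b) /= ?addn0 ?ltnn ?ltn_ord //.
move/eqP: det0; rewrite E det_schur ?Amax_unit // mulf_eq0 (negbTE det_Amax_neq0) /=.
rewrite det_mx11 !mxE subr_eq0 => /eqP ->.
rewrite (eq_bigr (fun b => \sum_(a < frank) fmx i (mcol a) * invmx Amax a b * fmx (mrow b) j)).
  rewrite exchange_big /=; apply: eq_bigr => a _.
  by rewrite /ibasis mulr_sumr; apply: eq_bigr => b _; rewrite mulrA.
by move=> b _; rewrite !mxE mulr_suml; apply: eq_bigr => a _; rewrite !mxE.
Qed.

Lemma f_vtrunc_factor m (x : V) j :
  f (vtrunc m x) j = \sum_(a < frank) f (vtrunc m x) (mcol a) * ibasis a j.
Proof.
rewrite /vtrunc f_vcomb.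
under eq_bigr => k _ do rewrite -/(fmx _ j) fmx_factor mulr_sumr.
rewrite exchange_big /=; apply: eq_bigr => a _.
by rewrite f_vcomb mulr_suml; apply: eq_bigr => k _; rewrite mulrA.
Qed.

Hypothesis fC : tau_continuous f.

(* A truncation of [x] satisfies the relation exactly, and by continuity its image is
   p-adically as close as we like to [f x] on the finitely many coordinates involved. *)
Lemma f_factor (x : V) : QpN x -> forall j, f x j = \sum_(a < frank) f x (mcol a) * ibasis a j.
Proof.
move=> [P HP] j.
pose h (w : V) := w j - \sum_(a < frank) w (mcol a) * ibasis a j.
apply/eqP; rewrite -subr_eq0 -/(h (f x)); apply/eqP; apply: in_pZ_eq0 => n.
pose D := (\max_(a < frank) qden (ibasis a j))%N.
pose F := j :: [seq mcol a | a <- iota 0 frank].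
have [F' [n' near_x]] := tau_continuous_close fC fQ HP F (n + D).
pose y := vtrunc (\max_(i <- F') i).+1 x.
have Py : XP P y.
  by move=> i Hi; rewrite /y vtruncE; case: ifP => _; [exact: HP | exact/integralE/in_pZ0].
have close_y : close_on F' n' x y.
  move=> i Hi; rewrite /y vtruncE ltnS (leq_bigmax_seq _ Hi) // subrr; exact: in_pZ0.
have {near_x} close_fy := near_x y Py close_y.
have hy : h (f y) = 0 by rewrite /h f_vtrunc_factor subrr.
have -> : h (f x) =
    (f x j - f y j) - \sum_(a < frank) (f x (mcol a) - f y (mcol a)) * ibasis a j.
  transitivity (h (f x) - h (f y)); first by rewrite hy subr0.
  rewrite /h; under [in RHS]eq_bigr => a _ do rewrite mulrBl.
  by rewrite sumrB; ring.
apply: in_pZB.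
  by rewrite -opprB; apply/in_pZN/(in_pZ_le (leq_addr D n))/close_fy; exact: mem_head.
apply: (big_ind (in_pZ n)); [exact: in_pZ0 | exact: in_pZD | move=> a _].
rewrite mulrC; apply: in_pZ_scale; apply: (@in_pZ_le _ _ (n + D)%N).
  by rewrite leq_add2l (leq_bigmax a).
rewrite -opprB; apply/in_pZN/close_fy.
by rewrite inE; apply/orP; right; apply/mapP; exists (nat_of_ord a); rewrite ?mem_iota ?ltn_ord.
Qed.

Lemma f_vcomb_mx (w : V) l :
  f (vcomb_mx (invmx Amax) (fun b : 'I_frank => mrow b) w) l = \sum_(a < frank) w a * ibasis a l.
Proof.
rewrite f_vcomb; under eq_bigr => b _ do rewrite mulr_suml.
rewrite exchange_big /=; apply: eq_bigr => a _.
by rewrite /ibasis mulr_sumr; apply: eq_bigr => b _; rewrite mulrA.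
Qed.

Definition image_emb : bmap p := f \o vcomb_mx (invmx Amax) (fun b : 'I_frank => mrow b).
Definition image_coord : bmap p := vselect frank mcol \o f.

Hypothesis f_idem : idempotentB f.

Lemma image_emb_coord x : QpN x -> image_emb (image_coord x) = f x.
Proof.
move=> Hx; apply: funext => l; rewrite /image_emb /= f_vcomb_mx (f_factor Hx).
by apply: eq_bigr => a _; rewrite /image_coord /vselect /= ltn_ord.
Qed.

Lemma image_coord_emb x i : (i < frank)%N -> image_coord (image_emb x) i = x i.
Proof.
move=> Hi; rewrite /image_coord /image_emb /= /vselect Hi (f_idem (QpN_vcomb _ _)) f_vcomb_mx.
rewrite (bigD1 (Ordinal Hi)) //= (ibasis_mcol _ (Ordinal Hi)) eqxx mulr1 big1 ?addr0 //.
by move=> a Ha; rewrite (ibasis_mcol _ (Ordinal Hi)) (negbTE Ha) mulr0.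
Qed.

Lemma mvn_dsum_id_zero :
  mvn_equiv (dsum_id (mx1 f) 1) (dsum_id (mx1 (@zeroB p)) 1).
Proof.
have inB_f : inB f by split.
have inB_image_emb : inB image_emb by apply: inB_comp; [exact: inB_f | exact: inB_vcomb_mx].
have inB_image_coord : inB image_coord by apply: inB_comp; [exact: inB_vselect | exact: inB_f].
exists (mx2 (@zeroB p) image_emb (@zeroB p) (vshiftl frank)),
       (mx2 (@zeroB p) (@zeroB p) image_coord (vshiftr frank)).
split.
- by move=> i j; rewrite /mx2; do 2 case: ifP => _; auto using inB_zero, inB_vshiftl.
- by move=> i j; rewrite /mx2; do 2 case: ifP => _; auto using inB_zero, inB_vshiftr.
- rewrite mxmul_mx2 dsum_id_mx2 => i j x Hx; rewrite /mx2 /bmap_add /=.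
  case: ifP => _; case: ifP => _; rewrite vadd0v; first exact: image_emb_coord.
  + apply: funext => l; rewrite /image_emb /= f_vcomb_mx big1 // => a _.
    by rewrite /vshiftr ltn_ord mul0r.
  + by apply: funext => l; rewrite /vshiftl /image_coord /vselect /= ltnNge leq_addl.
  + by apply: funext => l; rewrite /vshiftl /vshiftr ltnNge leq_addl /= addnK.
- rewrite mxmul_mx2 dsum_id_mx2 => i j x Hx; rewrite /mx2 /bmap_add /=.
  case: ifP => _; case: ifP => _; rewrite ?vadd0v //.
  + rewrite /image_coord /= f_vzero; apply: funext => l.
    by rewrite vaddE /vselect /vshiftr; case: ifP; rewrite addr0.
  + apply: funext => l; rewrite vaddE /vshiftr /vshiftl; case: ifPn => Hl.
      by rewrite image_coord_emb // addr0.
    by rewrite /image_coord /vselect /= (negbTE Hl) add0r subnK // leqNgt.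
Qed.

End ImageFactorization.

Theorem lemma3p15 (p : nat) (hp : prime p) (f : bmap p) :
  inB f -> idempotentB f -> image_findim f ->
  stably_equiv (mx1 f) (mx1 (@zeroB p)).
Proof.
case: p hp f => [|[|q]] // hp f [fQ fD fZ fC] f_idem [d [v [_ f_span]]].
by exists 1%N; apply: (mvn_dsum_id_zero hp fQ fD fZ f_span fC f_idem).
Qed.
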